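(* Assume $\|\hat F'(y)-\hat F'(x)\|_F\le L_{\hat F}\|y-x\|$ for all $x,y\in\mathcal F$, and that $\|\hat F'(x)\|\le M_{\hat F}$ for all $x\in\mathcal F$, for some $M_{\hat F}>0$. Let $\{x_k\}$ be computed by Scheme 1 with $$x_{k+1}=x_k-\eta_k\big(\hat F'(x_k)^*\hat F'(x_k)+\tau_kL_kI_n\big)^{-1}\hat F'(x_k)^*\hat F(x_k),$$ where $\tau_k>0$, $\eta_k>0$ and $\eta_k(2-\eta_k)\ge c>0$ for all $k\in\mathbb Z_+$. Then for $k\in\mathbb N$: $$\min_{i\in\{0,\dots,k-1\}}\|\nabla\hat f_2(x_i)\|^2\le\frac{8\big(2L_{\hat F}\max_{i\in\{0,\dots,k-1\}}\tau_i+M_{\hat F}^2\big)}{\eta(2-\eta)k}\sum_{i=0}^{k-1}\Big(\frac12\big(\tau_i-\hat f_1(x_i)\big)^2+\tau_i\big(\hat f_1(x_i)-\hat f_1(x_{i+1})\big)\Big),$$ where $\eta\in\operatorname{Argmin}_{k\in\mathbb Z_+}\{\eta_k(2-\eta_k)\}$.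
   Context: Let $F:\mathbb R^n\to\mathbb R^m$ be smooth, $\hat F=\frac1{\sqrt m}F$ with Jacobian $\hat F'(x)$ and its transpose $\hat F'(x)^*$; Euclidean norms, spectral norm for matrices, $\|\cdot\|_F$ Frobenius norm. $\hat f_1(x)=\|\hat F(x)\|$, $\hat f_2=\hat f_1^2$, $\psi_{x,L,\tau}(y)=\frac\tau2+\frac{\|\hat F(x)+\hat F'(x)(y-x)\|^2}{2\tau}+\frac L2\|y-x\|^2$. $\mathcal F$ closed convex with nonempty interior, $\mathcal L(\hat f_1(x_0))\subseteq\mathcal F$ and the generated sequence stays in $\mathcal F$. Scheme 1 (with the displayed update): input $x_0$, $L\in(0,L_{\hat F}]$, $L_0=L$; at iteration $k$ choose $\tau_k$, compute $x_{k+1}$; if $\hat f_1(x_{k+1})>\psi_{x_k,L_k,\tau_k}(x_{k+1})$, set $L_k:=\min\{2L_k,2L_{\hat F}\}$ and recompute; otherwise $L_{k+1}=\max\{L_k/2,L\}$. *)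

From HB Require Import structures.
From mathcomp Require Import all_boot all_order all_algebra.
From mathcomp Require Import all_classical all_reals all_analysis.
Set Implicit Arguments. Unset Strict Implicit. Unset Printing Implicit Defensive.
Import Order.TTheory GRing.Theory Num.Theory.
Import numFieldNormedType.Exports.
Local Open Scope classical_set_scope.
Local Open Scope ring_scope.

Section Defs.
Variable R : realType.

Definition enorm (p : nat) (v : 'cV[R]_p) : R :=
  Num.sqrt (\sum_(i < p) (v i 0) ^+ 2).

Definition fnorm (p q : nat) (A : 'M[R]_(p, q)) : R :=
  Num.sqrt (\sum_(i < p) \sum_(j < q) (A i j) ^+ 2).

Definition specnorm (p q : nat) (A : 'M[R]_(p, q)) : R :=
  sup [set enorm (A *m v) | v in [set v : 'cV[R]_q | enorm v <= 1]].

Definition jacmx (n m : nat) (f : 'cV[R]_n -> 'cV[R]_m) (x : 'cV[R]_n)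
  : 'M[R]_(m, n) :=
  \matrix_(i < m, j < n) ('D_(delta_mx j 0) f x) i 0.

Definition grad (n : nat) (f : 'cV[R]_n -> R) (x : 'cV[R]_n) : 'cV[R]_n :=
  \col_(j < n) 'D_(delta_mx j 0) f x.

Definition Fhat (n m : nat) (F : 'cV[R]_n -> 'cV[R]_m) : 'cV[R]_n -> 'cV[R]_m :=
  fun x => (Num.sqrt (m%:R))^-1 *: F x.

Definition f1 (n m : nat) (F : 'cV[R]_n -> 'cV[R]_m) (x : 'cV[R]_n) : R :=
  enorm (Fhat F x).

Definition f2 (n m : nat) (F : 'cV[R]_n -> 'cV[R]_m) (x : 'cV[R]_n) : R :=
  f1 F x ^+ 2.

Definition psi (n m : nat) (F : 'cV[R]_n -> 'cV[R]_m) (x : 'cV[R]_n)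
  (L tau : R) (y : 'cV[R]_n) : R :=
  tau / 2 + enorm (Fhat F x + jacmx (Fhat F) x *m (y - x)) ^+ 2 / (2 * tau)
  + L / 2 * enorm (y - x) ^+ 2.

Definition step (n m : nat) (F : 'cV[R]_n -> 'cV[R]_m) (x : 'cV[R]_n)
  (tau eta Lk : R) : 'cV[R]_n :=
  let J := jacmx (Fhat F) x in
  x - eta *: (invmx (J^T *m J + (tau * Lk) *: 1%:M) *m (J^T *m Fhat F x)).

(* Successive trial values of L_k in the inner loop of Scheme 1, starting
   from s: s, min(2s, 2 LF), ... *)
Fixpoint trialL (LF s : R) (j : nat) : R :=
  match j with
  | 0 => s
  | j'.+1 => Num.min (2 * trialL LF s j') (2 * LF)
  end.

Definition accepted (n m : nat) (F : 'cV[R]_n -> 'cV[R]_m) (x : 'cV[R]_n)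
  (tau eta Lk : R) : Prop :=
  f1 F (step F x tau eta Lk) <= psi F x Lk tau (step F x tau eta Lk).

(* {x_k} is generated by Scheme 1 with parameters tau_k, eta_k:
   Lstart k is the value of L_k at the start of iteration k,
   Lacc k the value of L_k at which the test is passed. *)
Definition scheme1 (n m : nat) (F : 'cV[R]_n -> 'cV[R]_m) (L LF : R)
  (x : nat -> 'cV[R]_n) (tau eta Lstart Lacc : nat -> R) : Prop :=
  Lstart 0%N = L /\
  (forall k, Lstart k.+1 = Num.max (Lacc k / 2) L) /\
  (forall k, exists j : nat,
      Lacc k = trialL LF (Lstart k) j /\
      (forall j', (j' < j)%N ->
         ~ accepted F (x k) (tau k) (eta k) (trialL LF (Lstart k) j')) /\
      accepted F (x k) (tau k) (eta k) (Lacc k)) /\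
  (forall k, x k.+1 = step F (x k) (tau k) (eta k) (Lacc k)).

End Defs.

From HB Require Import structures.
From mathcomp Require Import all_boot all_order all_algebra.
From mathcomp Require Import all_classical all_reals all_analysis.
From mathcomp Require Import ring lra.
Import Order.TTheory GRing.Theory Num.Theory.
Import numFieldNormedType.Exports.
Local Open Scope classical_set_scope.
Local Open Scope ring_scope.
Set Implicit Arguments. Unset Strict Implicit. Unset Printing Implicit Defensive.

(* Write [J] and [r] for the Jacobian and the value of [Fhat F] at [x_k],
   [s = tau_k L_k] and [h = (J^T J + s I)^-1 J^T r], so that
   [x_{k+1} = x_k - eta_k h].  Since [J^T r = (J^T J + s I) h], the model in
   [psi] along the step satisfies
     |r - eta J h|^2 + s |eta h|^2 = |r|^2 - eta (2 - eta) <J^T r, h>,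
   and the acceptance test, multiplied by [2 tau_k], becomes
     eta_k (2 - eta_k) <J^T r, h>
       <= (tau_k - f1(x_k))^2 + 2 tau_k (f1(x_k) - f1(x_{k+1})).
   On the other hand [grad f2(x_k) = 2 J^T r] and
   [|J^T r|^2 <= (M^2 + s) <J^T r, h>], while [L_k <= 2 L_F] by construction
   of the trial values.  Hence every squared gradient norm is at most
   [8 (2 L_F tau_k + M^2) / (eta_k (2 - eta_k))] times the corresponding
   summand, and the minimum is at most the mean. *)

Section InnerProduct.
Variable R : realType.

Definition dot p (u v : 'cV[R]_p) : R := (u^T *m v) 0 0.

Lemma dotE p (u v : 'cV[R]_p) : dot u v = \sum_(i < p) u i 0 * v i 0.
Proof. by rewrite /dot mxE; apply: eq_bigr => i _; rewrite mxE. Qed.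

Lemma enorm_sqE p (u : 'cV[R]_p) : enorm u ^+ 2 = dot u u.
Proof.
rewrite /enorm sqr_sqrtr ?dotE; last by rewrite sumr_ge0 // => i _; rewrite sqr_ge0.
by apply: eq_bigr => i _; rewrite expr2.
Qed.

Lemma enorm_ge0 p (u : 'cV[R]_p) : 0 <= enorm u.
Proof. exact: sqrtr_ge0. Qed.

Lemma dot_ge0 p (u : 'cV[R]_p) : 0 <= dot u u.
Proof. by rewrite -enorm_sqE sqr_ge0. Qed.

Lemma dotC p (u v : 'cV[R]_p) : dot u v = dot v u.
Proof. by rewrite !dotE; apply: eq_bigr => i _; rewrite mulrC. Qed.

Lemma dotDl p (u v w : 'cV[R]_p) : dot (u + v) w = dot u w + dot v w.
Proof. by rewrite /dot linearD /= mulmxDl mxE. Qed.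

Lemma dotDr p (u v w : 'cV[R]_p) : dot w (u + v) = dot w u + dot w v.
Proof. by rewrite /dot mulmxDr mxE. Qed.

Lemma dotZl p a (u w : 'cV[R]_p) : dot (a *: u) w = a * dot u w.
Proof. by rewrite /dot linearZ /= -scalemxAl mxE. Qed.

Lemma dotZr p a (u w : 'cV[R]_p) : dot w (a *: u) = a * dot w u.
Proof. by rewrite /dot -scalemxAr mxE. Qed.

Lemma dotNl p (u w : 'cV[R]_p) : dot (- u) w = - dot u w.
Proof. by rewrite -scaleN1r dotZl mulN1r. Qed.

Lemma dotNr p (u w : 'cV[R]_p) : dot w (- u) = - dot w u.
Proof. by rewrite -scaleN1r dotZr mulN1r. Qed.

Lemma dot_mulmxl p q (A : 'M[R]_(q, p)) (u : 'cV[R]_p) (v : 'cV[R]_q) :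
  dot (A *m u) v = dot u (A^T *m v).
Proof. by rewrite /dot trmx_mul mulmxA. Qed.

Lemma dot_eq0 p (u : 'cV[R]_p) : (dot u u == 0) = (u == 0).
Proof.
apply/idP/eqP => [|->]; last by rewrite dotE big1 // => i _; rewrite mxE mul0r.
rewrite dotE psumr_eq0 => [/allP u0|i _]; last by rewrite -expr2 sqr_ge0.
apply/matrixP => i j; rewrite ord1 mxE.
by have := u0 i (mem_index_enum _); rewrite /= mulf_eq0 orbb => /eqP.
Qed.

Lemma enorm_eq0 p (u : 'cV[R]_p) : (enorm u == 0) = (u == 0).
Proof. by rewrite -(sqrf_eq0 (enorm u)) enorm_sqE dot_eq0. Qed.

Lemma enorm0 p : enorm (0 : 'cV[R]_p) = 0.
Proof. by apply/eqP; rewrite enorm_eq0. Qed.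

Lemma enormZ p a (u : 'cV[R]_p) : enorm (a *: u) = `|a| * enorm u.
Proof.
rewrite /enorm -sqrtr_sqr -sqrtrM ?sqr_ge0 // mulr_sumr.
by congr Num.sqrt; apply: eq_bigr => i _; rewrite mxE exprMn.
Qed.

End InnerProduct.

Section OperatorNorm.
Variable R : realType.

Lemma normr_coord_le_enorm p (v : 'cV[R]_p) i : `|v i 0| <= enorm v.
Proof.
rewrite -sqrtr_sqr ler_sqrt; last by rewrite sumr_ge0 // => j _; rewrite sqr_ge0.
by rewrite (bigD1 i) //= lerDl sumr_ge0 // => j _; rewrite sqr_ge0.
Qed.

Lemma specnorm_has_sup p q (J : 'M[R]_(q, p)) :
  has_sup [set enorm (J *m v) | v in [set v : 'cV[R]_p | enorm v <= 1]].
Proof.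
split; first by exists (enorm (J *m 0)), 0; rewrite //= enorm0.
exists (Num.sqrt (\sum_(i < q) (\sum_(j < p) `|J i j|) ^+ 2)) => _ [v /= v1 <-].
rewrite ler_sqrt; last by rewrite sumr_ge0 // => i _; rewrite sqr_ge0.
apply: ler_sum => i _; rewrite -(real_normK (num_real ((J *m v) i 0))).
rewrite lerXn2r ?nnegrE ?sumr_ge0 // mxE.
apply: le_trans (ler_norm_sum _ _ _) _; apply: ler_sum => j _.
by rewrite normrM ler_piMr // (le_trans (normr_coord_le_enorm v j)).
Qed.

Lemma specnorm_ge0 p q (J : 'M[R]_(q, p)) : 0 <= specnorm J.
Proof.
apply: le_trans (sup_upper_bound (specnorm_has_sup J) _).
  exact: (enorm_ge0 (J *m 0)).
by exists 0; rewrite //= enorm0.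
Qed.

Lemma enorm_mulmx_le p q (J : 'M[R]_(q, p)) (w : 'cV[R]_p) :
  enorm (J *m w) <= specnorm J * enorm w.
Proof.
have [->|w0] := eqVneq w 0; first by rewrite mulmx0 !enorm0 mulr0.
have e0 : 0 < enorm w by rewrite lt_def enorm_eq0 w0 enorm_ge0.
have e'0 : 0 <= (enorm w)^-1 by rewrite invr_ge0 ltW.
rewrite -ler_pdivrMr // mulrC -(ger0_norm e'0) -enormZ scalemxAr.
apply: (sup_upper_bound (specnorm_has_sup J)).
by exists ((enorm w)^-1 *: w); rewrite //= enormZ ger0_norm // mulVf ?gt_eqF.
Qed.

Lemma dot_mulmx_le p q (J : 'M[R]_(q, p)) M (w : 'cV[R]_p) :
  specnorm J <= M -> dot (J *m w) (J *m w) <= M ^+ 2 * dot w w.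
Proof.
move=> JM; have M0 := le_trans (specnorm_ge0 J) JM.
rewrite -!enorm_sqE -exprMn lerXn2r ?nnegrE ?mulr_ge0 ?enorm_ge0 //.
exact: le_trans (enorm_mulmx_le J w) (ler_wpM2r (enorm_ge0 w) JM).
Qed.

(* Expand [0 <= |N w - J J^T w|^2] and bound [|J J^T w|^2] by [N |J^T w|^2]. *)
Lemma dot_trmx_mulmx_le p q (J : 'M[R]_(q, p)) (N : R) : 0 < N ->
  (forall w, dot (J *m w) (J *m w) <= N * dot w w) ->
  forall w, dot (J^T *m w) (J^T *m w) <= N * dot w w.
Proof.
move=> N0 JN w; set u := J^T *m w.
have wJu : dot w (J *m u) = dot u u by rewrite dotC dot_mulmxl.
have := dot_ge0 (N *: w - J *m u).
rewrite !(dotDl, dotDr, dotZl, dotZr, dotNl, dotNr) (dotC (J *m u) w) wJu.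
have := JN u; have := dot_ge0 u; have := dot_ge0 w => w0 u0 Ju expand.
have : N * (dot u u - N * dot w w) <= 0 by nra.
by rewrite pmulr_rle0 // subr_le0.
Qed.

End OperatorNorm.

Section LevenbergMarquardtStep.
Variable R : realType.
Variables (p q : nat) (J : 'M[R]_(q, p)) (r : 'cV[R]_q) (s : R).
Hypothesis s_gt0 : 0 < s.

Definition lm_dir : 'cV[R]_p := invmx (J^T *m J + s *: 1%:M) *m (J^T *m r).

Lemma gram_reg_unitmx : J^T *m J + s *: 1%:M \in unitmx.
Proof.
rewrite unitmxE unitfE; apply/negP => /det0P [v v_neq0 vA].
have : dot v^T ((J^T *m J + s *: 1%:M) *m v^T) = 0.
  by rewrite /dot trmxK mulmxA vA mul0mx mxE.
rewrite mulmxDl -mulmxA -scalemxAl mul1mx dotDr dotZr -dot_mulmxl.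
have := s_gt0; have := dot_ge0 (J *m v^T); have := dot_ge0 v^T.
move=> v0 Jv0 s0 eq0; have /eqP : dot v^T v^T = 0 by nra.
by rewrite dot_eq0 -trmx0 (inj_eq trmx_inj) (negPf v_neq0).
Qed.

Lemma gram_reg_lm_dir : (J^T *m J + s *: 1%:M) *m lm_dir = J^T *m r.
Proof. by rewrite mulmxA mulmxV ?mul1mx // gram_reg_unitmx. Qed.

Lemma dot_grad_lm_dir :
  dot (J^T *m r) lm_dir = dot (J *m lm_dir) (J *m lm_dir) + s * dot lm_dir lm_dir.
Proof.
rewrite -{1}gram_reg_lm_dir mulmxDl -mulmxA -scalemxAl mul1mx dotDl dotZl.
by rewrite dot_mulmxl trmxK.
Qed.

Lemma dot_grad_lm_dir_ge0 : 0 <= dot (J^T *m r) lm_dir.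
Proof. by rewrite dot_grad_lm_dir addr_ge0 ?mulr_ge0 ?dot_ge0 ?ltW. Qed.

Lemma lm_model_step eta :
  dot (r - J *m (eta *: lm_dir)) (r - J *m (eta *: lm_dir))
    + s * dot (eta *: lm_dir) (eta *: lm_dir)
  = dot r r - eta * (2 - eta) * dot (J^T *m r) lm_dir.
Proof.
have rJh : dot r (J *m lm_dir) = dot (J^T *m r) lm_dir.
  by rewrite dot_mulmxl trmxK.
rewrite -scalemxAr !(dotDl, dotDr, dotZl, dotZr, dotNl, dotNr).
rewrite (dotC (J *m lm_dir) r) rJh dot_grad_lm_dir; ring.
Qed.

Lemma dot_grad_le_lm_dir N : 0 < N ->
  (forall w, dot (J *m w) (J *m w) <= N * dot w w) ->
  dot (J^T *m r) (J^T *m r) <= (N + s) * dot (J^T *m r) lm_dir.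
Proof.
move=> N0 JN; rewrite dot_grad_lm_dir -{1 2}gram_reg_lm_dir.
rewrite mulmxDl -mulmxA -scalemxAl mul1mx.
set g := J^T *m (J *m lm_dir).
have gh : dot g lm_dir = dot (J *m lm_dir) (J *m lm_dir).
  by rewrite [LHS]dot_mulmxl trmxK.
rewrite !(dotDl, dotDr, dotZl, dotZr) (dotC lm_dir) gh.
have := dot_trmx_mulmx_le N0 JN (J *m lm_dir); have := JN lm_dir.
have := dot_ge0 (J *m lm_dir); have := dot_ge0 lm_dir; have := s_gt0.
rewrite -/g; set a := dot (J *m lm_dir) _; set b := dot lm_dir lm_dir.
move=> s0 b0 a0 ab ga; nra.
Qed.

End LevenbergMarquardtStep.

Section LeastSquares.
Variable R : realType.
Variables (n m : nat) (F : 'cV[R]_n -> 'cV[R]_m).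

Lemma stepE x tau eta Lk :
  step F x tau eta Lk = x - eta *: lm_dir (jacmx (Fhat F) x) (Fhat F x) (tau * Lk).
Proof. by []. Qed.

Lemma accepted_decrease x tau eta Lk : 0 < tau -> 0 < Lk ->
  accepted F x tau eta Lk ->
  eta * (2 - eta) * dot ((jacmx (Fhat F) x)^T *m Fhat F x)
                        (lm_dir (jacmx (Fhat F) x) (Fhat F x) (tau * Lk))
  <= (tau - f1 F x) ^+ 2 + 2 * tau * (f1 F x - f1 F (step F x tau eta Lk)).
Proof.
move=> tau_gt0 Lk_gt0; rewrite /accepted /psi stepE.
set J := jacmx _ x; set r := Fhat F x; set h := lm_dir J r (tau * Lk).
have -> : x - eta *: h - x = - (eta *: h) by rewrite addrAC subrr add0r.
rewrite mulmxN [enorm (- _) ^+ 2]enorm_sqE dotNl dotNr opprK.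
have := lm_model_step J r (mulr_gt0 tau_gt0 Lk_gt0) eta.
rewrite -(enorm_sqE r) -enorm_sqE -/(f1 F x) -/h.
set D := enorm (r - _) ^+ 2; set E := dot (eta *: h) _; set Q := dot _ h.
set f := f1 F x; set f' := f1 F _ => model acc.
have : 2 * tau * f' <= tau ^+ 2 + f ^+ 2 - eta * (2 - eta) * Q.
  have -> : tau ^+ 2 + f ^+ 2 - eta * (2 - eta) * Q
            = 2 * tau * (tau / 2 + D / (2 * tau) + Lk / 2 * E).
    by rewrite -addrA -model; field; rewrite gt_eqF.
  by rewrite ler_pM2l // mulr_gt0.
nra.
Qed.

Hypothesis F_diff : forall y, differentiable F y.

Lemma derivable_Fhat x v : derivable (Fhat F) x v.
Proof. exact/derivableZ/diff_derivable. Qed.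

Lemma grad_f2 x : grad (f2 F) x = 2 *: ((jacmx (Fhat F) x)^T *m Fhat F x).
Proof.
have f2E : f2 F = \sum_(i < m) (fun y => Fhat F y i 0) ^+ 2.
  rewrite fct_sumE; apply/funext => y; under eq_bigr do rewrite exprfctE.
  by rewrite /f2 /f1 /enorm sqr_sqrtr // sumr_ge0 // => i _; rewrite sqr_ge0.
have dFi i j : derivable (fun y => Fhat F y i 0) x (delta_mx j 0).
  by apply: (derivable_mxP _ _ _).1; apply: derivable_Fhat.
apply/matrixP => j k; rewrite !mxE ord1 f2E derive_sum => [|i]; last first.
  exact/derivableX/dFi.
rewrite mulr_sumr; apply: eq_bigr => i _; rewrite deriveX // !mxE.
rewrite (derive_mx (@derivable_Fhat x _)) !mxE /= expr1.
by rewrite -[(2 * _) *: _]/(2 * _ * _) -mulrA [X in 2 * X]mulrC.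
Qed.

End LeastSquares.

Section TrialConstants.
Variable R : realType.

Lemma trialL_gt0 (LF s : R) j : 0 < LF -> 0 < s -> 0 < trialL LF s j.
Proof.
move=> LF_gt0 s_gt0; elim: j => //= j IH.
by rewrite lt_min !mulr_gt0 ?ltr0n.
Qed.

Lemma trialL_le (LF s : R) j : s <= 2 * LF -> trialL LF s j <= 2 * LF.
Proof. by case: j => //= j _; rewrite ge_min lexx orbT. Qed.

End TrialConstants.

Section SchemeOne.
Variable R : realType.
Variables (n m : nat) (F : 'cV[R]_n -> 'cV[R]_m) (L LF MF : R).
Variables (x : nat -> 'cV[R]_n) (tau eta Lstart Lacc : nat -> R).
Hypotheses (L_gt0 : 0 < L) (L_le_LF : L <= LF).
Hypothesis scheme : scheme1 F L LF x tau eta Lstart Lacc.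

Let LF_gt0 : 0 < LF := lt_le_trans L_gt0 L_le_LF.

Lemma scheme1_Lstart_bound k : L <= Lstart k <= LF.
Proof.
have [L0 [LS [acc _]]] := scheme.
elim: k => [|k /andP[Lk_ge kLF]]; first by rewrite L0 lexx.
rewrite LS le_max lexx orbT /= ge_max L_le_LF andbT ler_pdivrMr ?ltr0n //.
have [j [-> _]] := acc k.
rewrite mulrC; apply: trialL_le; have := LF_gt0; lra.
Qed.

Lemma scheme1_Lacc_gt0 k : 0 < Lacc k.
Proof.
have [_ [_ [acc _]]] := scheme; have [j [-> _]] := acc k.
have /andP[Lk _] := scheme1_Lstart_bound k.
exact: trialL_gt0 LF_gt0 (lt_le_trans L_gt0 Lk).
Qed.

Lemma scheme1_Lacc_le k : Lacc k <= 2 * LF.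
Proof.
have [_ [_ [acc _]]] := scheme; have [j [-> _]] := acc k.
have /andP[_ kLF] := scheme1_Lstart_bound k.
apply: trialL_le; have := LF_gt0; lra.
Qed.

Hypothesis F_diff : forall y, differentiable F y.
Hypothesis tau_gt0 : forall k, 0 < tau k.
Hypothesis MF_gt0 : 0 < MF.
Hypothesis jac_le_MF : forall k, specnorm (jacmx (Fhat F) (x k)) <= MF.

Definition descent_term k :=
  2^-1 * (tau k - f1 F (x k)) ^+ 2 + tau k * (f1 F (x k) - f1 F (x k.+1)).

Let J k := jacmx (Fhat F) (x k).
Let gain k :=
  dot ((J k)^T *m Fhat F (x k)) (lm_dir (J k) (Fhat F (x k)) (tau k * Lacc k)).

Let gain_ge0 k : 0 <= gain k.
Proof. exact/dot_grad_lm_dir_ge0/mulr_gt0/scheme1_Lacc_gt0. Qed.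

Lemma gain_le_descent_term k : eta k * (2 - eta k) * gain k <= 2 * descent_term k.
Proof.
have [_ [_ [acc next]]] := scheme.
have [j [_ [_ acc_k]]] := acc k.
have {acc_k} := accepted_decrease (tau_gt0 k) (scheme1_Lacc_gt0 k) acc_k.
by rewrite -(next k) /descent_term /gain /J; lra.
Qed.

Lemma grad_sq_le_gain k :
  enorm (grad (f2 F) (x k)) ^+ 2 <= 4 * (2 * LF * tau k + MF ^+ 2) * gain k.
Proof.
rewrite grad_f2 // enormZ exprMn ger0_norm ?ler0n // expr2 -natrM.
rewrite enorm_sqE -mulrA ler_pM2l ?ltr0n // /gain /J.
have JN w : dot (J k *m w) (J k *m w) <= MF ^+ 2 * dot w w.
  exact/dot_mulmx_le/jac_le_MF.
apply: le_trans (dot_grad_le_lm_dir _ (mulr_gt0 (tau_gt0 k) (scheme1_Lacc_gt0 k))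
                   (exprn_gt0 2 MF_gt0) JN) _.
rewrite ler_wpM2r ?(gain_ge0 k) //.
have := scheme1_Lacc_le k; have := tau_gt0 k; nra.
Qed.

Lemma scheme1_grad_sq_le k (E tmax : R) :
  0 < E -> E <= eta k * (2 - eta k) -> tau k <= tmax ->
  enorm (grad (f2 F) (x k)) ^+ 2
  <= 8 * (2 * LF * tmax + MF ^+ 2) / E * descent_term k.
Proof.
have := grad_sq_le_gain k; have := gain_le_descent_term k; have := gain_ge0 k.
have := LF_gt0; have := tau_gt0 k; have := sqr_ge0 MF.
set G := enorm _ ^+ 2; set Q := gain k; set T := descent_term k.
set e := eta k * (2 - eta k).
move=> MF2 tau0 LF0 Q0 QT GQ E_gt0 E_le tau_le.
have Ck0 : 0 <= 2 * LF * tau k + MF ^+ 2 by nra.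
have EQ : E * Q <= 2 * T by nra.
have T0 : 0 <= T by nra.
have LFT : LF * tau k * T <= LF * tmax * T.
  by rewrite ler_wpM2r // ler_wpM2l // ltW.
rewrite mulrAC ler_pdivlMr // mulrC.
apply: le_trans (_ : E * G <= (4 * (2 * LF * tau k + MF ^+ 2)) * (E * Q)) _.
  by rewrite [X in _ <= X]mulrCA ler_pM2l.
apply: le_trans (_ : _ <= (4 * (2 * LF * tau k + MF ^+ 2)) * (2 * T)) _.
  by rewrite ler_wpM2l ?mulr_ge0.
nra.
Qed.

End SchemeOne.

Lemma bigmin_le_mean_bound (R : realFieldType) (a b : nat -> R) (K : R) k :
  (0 < k)%N -> (forall i, (i < k)%N -> a i <= K * b i) ->
  \big[Num.min/a 0%N]_(i < k) a i <= K / k%:R * \sum_(i < k) b i.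
Proof.
move=> k_gt0 ab; rewrite mulrAC ler_pdivlMr ?ltr0n //.
have -> : \big[Num.min/a 0%N]_(i < k) a i * k%:R
          = \sum_(i < k) \big[Num.min/a 0%N]_(i < k) a i.
  by rewrite sumr_const card_ord mulr_natr.
rewrite mulr_sumr; apply: ler_sum => i _.
by apply: le_trans (ab i (ltn_ord i)); apply: bigmin_le.
Qed.

Theorem theorem6 (R : realType) (n m : nat) (F : 'cV[R]_n -> 'cV[R]_m)
  (Fs : set 'cV[R]_n) (LF MF L c : R)
  (x : nat -> 'cV[R]_n) (tau eta Lstart Lacc : nat -> R) :
  (forall y, differentiable F y) ->
  closed Fs -> convex_set Fs -> (interior Fs) !=set0 ->
  [set y | f1 F y <= f1 F (x 0%N)] `<=` Fs ->
  (forall y z, Fs y -> Fs z ->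
     fnorm (jacmx (Fhat F) z - jacmx (Fhat F) y) <= LF * enorm (z - y)) ->
  0 < MF -> (forall y, Fs y -> specnorm (jacmx (Fhat F) y) <= MF) ->
  0 < L -> L <= LF ->
  0 < c ->
  (forall k, 0 < tau k) -> (forall k, 0 < eta k) ->
  (forall k, c <= eta k * (2 - eta k)) ->
  scheme1 F L LF x tau eta Lstart Lacc ->
  (forall k, Fs (x k)) ->
  forall etastar : R,
    (exists j, etastar = eta j) ->
    (forall k, etastar * (2 - etastar) <= eta k * (2 - eta k)) ->
  forall k : nat, (0 < k)%N ->
    \big[Num.min/ enorm (grad (f2 F) (x 0%N)) ^+ 2]_(i < k)
        enorm (grad (f2 F) (x i)) ^+ 2
    <= 8 * (2 * LF * \big[Num.max/ tau 0%N]_(i < k) tau i + MF ^+ 2)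
         / (etastar * (2 - etastar) * k%:R)
       * \sum_(i < k) (2^-1 * (tau i - f1 F (x i)) ^+ 2
                       + tau i * (f1 F (x i) - f1 F (x i.+1))).
Proof.
(* Closedness, convexity and the Lipschitz bound on the Jacobian only ensure
   that the inner loop of Scheme 1 terminates, which [scheme1] already asserts. *)
move=> F_diff _ _ _ _ _ MF_gt0 jac_le L_gt0 L_le_LF c_gt0 tau_gt0 _ c_le
  scheme x_in etastar [j ->] eta_min k k_gt0.
have eta_j_gt0 : 0 < eta j * (2 - eta j) := lt_le_trans c_gt0 (c_le j).
rewrite invfM mulrA.
apply: (bigmin_le_mean_bound (a := fun i => enorm (grad (f2 F) (x i)) ^+ 2)
  (b := descent_term F x tau)) => // i ik.
apply: (scheme1_grad_sq_le L_gt0 L_le_LF scheme F_diff tau_gt0 MF_gt0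
  (fun l => jac_le _ (x_in l)) eta_j_gt0 (eta_min i)).
exact: (le_bigmax _ _ (Ordinal ik)).
Qed.
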